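(* The projection of $\mathcal T_\rightarrow$ (and of $\mathcal T_\leftarrow$) onto the complex plane of the coordinate $z_2=-[z\cdot b]$ is the cut-plane $\mathbb C\setminus[-1,1]$. The image of $\mathcal T_\leftarrow\times\mathcal T_\rightarrow$ (and of $\mathcal T_\rightarrow\times\mathcal T_\leftarrow$) under $(z,z')\mapsto[z\cdot z']$ is the cut-plane $\mathbb C\setminus[-1,1]$.
   Context: $[z\cdot z']=z_0z'_0-z_1z'_1-z_2z'_2$ on $\mathbb C^3$, $z^2=[z\cdot z]$; $X^{(c)}=\{z\in\mathbb C^3:z^2=-1\}$, $z=x+iy$; $V^+=\{y\in\mathbb R^3:y^2>0,y_0>0\}$; fix $e\in V^+$; $\mathcal T_\rightarrow=\{z\in X^{(c)}:y^2<0,{\rm sgn}\det(e,x,y)=-1\}$, $\mathcal T_\leftarrow=\{z\in X^{(c)}:y^2<0,{\rm sgn}\det(e,x,y)=+1\}$; $b=(0,0,1)$. *)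

From Stdlib Require Import Reals.
From Coquelicot Require Import Coquelicot.
Open Scope R_scope.

Record rvec3 := RV { r0 : R; r1 : R; r2 : R }.
Record cvec3 := CV { c0 : C; c1 : C; c2 : C }.

Definition cdot (z w : cvec3) : C :=
  Cminus (Cminus (Cmult (c0 z) (c0 w)) (Cmult (c1 z) (c1 w))) (Cmult (c2 z) (c2 w)).

Definition rdot (x y : rvec3) : R := r0 x * r0 y - r1 x * r1 y - r2 x * r2 y.
Definition rsq (x : rvec3) : R := rdot x x.

Definition cre (z : cvec3) : rvec3 := RV (Re (c0 z)) (Re (c1 z)) (Re (c2 z)).
Definition cim (z : cvec3) : rvec3 := RV (Im (c0 z)) (Im (c1 z)) (Im (c2 z)).

Definition Xc (z : cvec3) : Prop := cdot z z = RtoC (-1).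

Definition Vplus (y : rvec3) : Prop := rsq y > 0 /\ r0 y > 0.

Definition det3 (a b c : rvec3) : R :=
    r0 a * (r1 b * r2 c - r2 b * r1 c)
  - r0 b * (r1 a * r2 c - r2 a * r1 c)
  + r0 c * (r1 a * r2 b - r2 a * r1 b).

Definition T_right (e : rvec3) (z : cvec3) : Prop :=
  Xc z /\ rsq (cim z) < 0 /\ det3 e (cre z) (cim z) < 0.
Definition T_left (e : rvec3) (z : cvec3) : Prop :=
  Xc z /\ rsq (cim z) < 0 /\ det3 e (cre z) (cim z) > 0.

Definition bvec : cvec3 := CV (RtoC 0) (RtoC 0) (RtoC 1).

Definition cut_plane (w : C) : Prop := ~ (Im w = 0 /\ -1 <= Re w <= 1).

(* Write z = x + iy.  On X^(c) one has x.y = 0 and x^2 = y^2 - 1, so when y is spacelike the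
   plane of x and y is spacelike, its Minkowski normal N = x × y is timelike, and
   det(e, x, y) = e.N tells whether N is future or past directed.  Hence for z in T_<- and z'
   in T_-> the normals satisfy N.N' < 0; expanding x' and y' in the orthogonal frame (x, y, N),
   this inequality and z'^2 = -1 force [z.z']^2 > 1 as soon as [z.z'] is real.
   Conversely, w off [-1, 1] is the coordinate z_2 of z = (0, ±sqrt(1 - w^2), w), the sign of
   the root selecting the tuboid.  For the products, take z_0 in T_<- with [z_0.b] = w: a small
   imaginary rotation of the (z_1, z_2)-plane preserves [.], keeps z_0 in T_<- and moves b
   into T_->. *)

From Stdlib Require Import Reals Psatz.
From Coquelicot Require Import Coquelicot.
Open Scope R_scope.

Lemma C_eq_Re_Im (u v : C) : Re u = Re v -> Im u = Im v -> u = v.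
Proof. destruct u, v; unfold Re, Im; simpl; intros -> ->; reflexivity. Qed.

Lemma rdot_sym x y : rdot x y = rdot y x.
Proof. unfold rdot; ring. Qed.

Lemma Re_cdot z w : Re (cdot z w) = rdot (cre z) (cre w) - rdot (cim z) (cim w).
Proof.
destruct z as [[? ?] [? ?] [? ?]], w as [[? ?] [? ?] [? ?]].
unfold cdot, rdot, cre, cim, Re, Im; simpl; ring.
Qed.

Lemma Im_cdot z w : Im (cdot z w) = rdot (cre z) (cim w) + rdot (cim z) (cre w).
Proof.
destruct z as [[? ?] [? ?] [? ?]], w as [[? ?] [? ?] [? ?]].
unfold cdot, rdot, cre, cim, Re, Im; simpl; ring.
Qed.

Lemma cdot_sym z w : cdot z w = cdot w z.
Proof.
apply C_eq_Re_Im; rewrite ?Re_cdot, ?Im_cdot, !(rdot_sym (cre z)), !(rdot_sym (cim z)); ring.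
Qed.

Lemma Xc_rdot z : Xc z -> rsq (cre z) - rsq (cim z) = -1 /\ rdot (cre z) (cim z) = 0.
Proof.
unfold Xc, rsq; intro hz; split.
- rewrite <- Re_cdot, hz; reflexivity.
- assert (him : Im (cdot z z) = 0) by (rewrite hz; reflexivity).
  rewrite Im_cdot, (rdot_sym (cim z)) in him; lra.
Qed.

Definition cross (x y : rvec3) : rvec3 :=
  RV (r1 x * r2 y - r2 x * r1 y) (r0 x * r2 y - r2 x * r0 y) (r1 x * r0 y - r0 x * r1 y).

Lemma det3_rdot_cross a x y : det3 a x y = rdot a (cross x y).
Proof. destruct a, x, y; unfold det3, rdot, cross; simpl; ring. Qed.

Lemma rdot_cross_cross x y x' y' :
  rdot (cross x y) (cross x' y') = rdot x x' * rdot y y' - rdot x y' * rdot y x'.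
Proof. destruct x, y, x', y'; unfold rdot, cross; simpl; ring. Qed.

Lemma rdot_cross_expand x y a b : rdot x y = 0 ->
  rsq x * rsq y * rdot a b =
  rsq y * (rdot x a * rdot x b) + rsq x * (rdot y a * rdot y b)
  + rdot (cross x y) a * rdot (cross x y) b.
Proof.
intro hxy.
assert (gram : (rsq x * rsq y - rdot x y ^ 2) * rdot a b =
  rsq y * (rdot x a * rdot x b) + rsq x * (rdot y a * rdot y b)
  - rdot x y * (rdot x a * rdot y b + rdot y a * rdot x b)
  + rdot (cross x y) a * rdot (cross x y) b).
{ destruct a, b, x, y; unfold rsq, rdot, cross; simpl; ring. }
replace (rsq x * rsq y) with (rsq x * rsq y - rdot x y ^ 2) by (rewrite hxy; ring).
rewrite gram, hxy; ring.
Qed.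

Lemma timelike_rdot_sign a b : rsq a > 0 -> rsq b > 0 -> rdot a b * (r0 a * r0 b) > 0.
Proof.
destruct a as [a0 a1 a2], b as [b0 b1 b2]; unfold rsq, rdot; simpl; intros ha hb.
set (m := a0 * b0); set (k := a1 * b1 + a2 * b2).
assert (hcs : k * k <= (a1 * a1 + a2 * a2) * (b1 * b1 + b2 * b2))
  by (pose proof (pow2_ge_0 (a1 * b2 - a2 * b1)); unfold k; nra).
assert (hkm : k * k < m * m).
{ unfold m. apply Rle_lt_trans with (1 := hcs).
  replace (a0 * b0 * (a0 * b0)) with ((a0 * a0) * (b0 * b0)) by ring.
  apply Rmult_le_0_lt_compat; nra. }
replace (m - a1 * b1 - a2 * b2) with (m - k) by (unfold k; ring).
clearbody m k.
assert (hsum : (m - k) * m * 2 = (m - k) * (m - k) + (m - k) * (m + k)) by ring.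
nra.
Qed.

Lemma rsq_cross_pos z : Xc z -> rsq (cim z) < 0 -> rsq (cross (cre z) (cim z)) > 0.
Proof.
intros hz hy; destruct (Xc_rdot z hz) as [hX hxy].
unfold rsq in *; rewrite rdot_cross_cross, hxy; nra.
Qed.

Lemma sq_sub_gt1_of_frame_eqs (Y Y' P Q R p q : R) :
  Y < 0 -> Y' < 0 -> P * Q + R * R < 0 ->
  (Y - 1) * Y * (Y' - 1) = Y * (P * P) + (Y - 1) * (R * R) + p * p ->
  (Y - 1) * Y * Y' = Y * (R * R) + (Y - 1) * (Q * Q) + q * q ->
  Y * (P * R) - (Y - 1) * (R * Q) + p * q = 0 ->
  (P - Q) ^ 2 > 1.
Proof.
intros hy hy' hNN ex ey exy.
(* p q = - R t, and the left side of [key] is positive: P Q + R^2 < 0 gives q^2 < t^2,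
   hence R^2 <= p^2. *)
set (t := Y * P - (Y - 1) * Q).
assert (hpq : p * q = - R * t) by (unfold t; lra).
assert (key : p * p - q * q - R * R + t * t = (Y - 1) * Y * ((P - Q) ^ 2 - 1))
  by (unfold t; lra).
assert (hXY : (Y - 1) * Y > 0) by nra.
assert (hqt : q * q < t * t).
{ assert ((Y - 1) * Y * (P * Q + R * R) < 0) by nra.
  assert (Y * (R * R) * (2 * Y - 1) >= 0) by nra.
  assert ((Y - 1) * Y * Y' < 0) by nra.
  assert ((Y - 1) * Y * (Q * Q) >= 0) by nra.
  pose proof (pow2_ge_0 (Y * P)).
  unfold t; lra. }
assert (hRp : R * R <= p * p).
{ assert (ht : t * t > 0) by nra.
  assert (R * R * (t * t) <= p * p * (t * t))
    by (replace (R * R * (t * t)) with ((p * q) * (p * q)) by (rewrite hpq; ring); nra).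
  nra. }
assert (hgt : (Y - 1) * Y * ((P - Q) ^ 2 - 1) > 0) by lra.
nra.
Qed.

Lemma cut_plane_cdot_of_opposite_normals z z' :
  Xc z -> Xc z' -> rsq (cim z) < 0 -> rsq (cim z') < 0 ->
  rdot (cross (cre z) (cim z)) (cross (cre z') (cim z')) < 0 -> cut_plane (cdot z z').
Proof.
intros hz hz' hy hy' hNN [hIm hRe].
destruct (Xc_rdot z hz) as [hX hxy], (Xc_rdot z' hz') as [hX' hxy'].
rewrite Im_cdot in hIm; rewrite Re_cdot in hRe; rewrite rdot_cross_cross in hNN.
(* x'^2, y'^2 and x'.y' = 0 expanded in the orthogonal frame (x, y, x × y) *)
pose proof (rdot_cross_expand _ _ (cre z') (cre z') hxy) as ex'.
pose proof (rdot_cross_expand _ _ (cim z') (cim z') hxy) as ey'.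
pose proof (rdot_cross_expand _ _ (cre z') (cim z') hxy) as exy'.
rewrite hxy' in exy'; unfold rsq in *.
set (X := rdot (cre z) (cre z)) in *; set (Y := rdot (cim z) (cim z)) in *.
set (X' := rdot (cre z') (cre z')) in *; set (Y' := rdot (cim z') (cim z')) in *.
set (P := rdot (cre z) (cre z')) in *; set (Q := rdot (cim z) (cim z')) in *.
set (R := rdot (cre z) (cim z')) in *; set (S := rdot (cim z) (cre z')) in *.
set (p := rdot (cross (cre z) (cim z)) (cre z')) in *.
set (q := rdot (cross (cre z) (cim z)) (cim z')) in *.
clearbody X Y X' Y' P Q R S p q.
assert (S = - R) by lra; assert (X = Y - 1) by lra; assert (X' = Y' - 1) by lra; subst S X X'.
assert ((P - Q) ^ 2 > 1) by (apply (sq_sub_gt1_of_frame_eqs Y Y' P Q R p q); lra).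
nra.
Qed.

Lemma cut_plane_cdot_left_right e z z' : Vplus e -> T_left e z -> T_right e z' ->
  cut_plane (cdot z z').
Proof.
intros [he he0] [hz [hy hd]] [hz' [hy' hd']].
rewrite det3_rdot_cross in hd, hd'.
apply cut_plane_cdot_of_opposite_normals; auto.
set (N := cross (cre z) (cim z)) in *; set (N' := cross (cre z') (cim z')) in *.
assert (hN : rsq N > 0) by now apply rsq_cross_pos.
assert (hN' : rsq N' > 0) by now apply rsq_cross_pos.
pose proof (timelike_rdot_sign e N he hN) as hsN.
pose proof (timelike_rdot_sign e N' he hN') as hsN'.
pose proof (timelike_rdot_sign N N' hN hN') as hsNN'.
assert (rdot e N * r0 e > 0) by nra; assert (rdot e N' * r0 e < 0) by nra.
assert (r0 N > 0) by nra; assert (r0 N' < 0) by nra.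
assert (r0 N * r0 N' < 0) by nra.
nra.
Qed.

Lemma cut_plane_c2 z : Xc z -> rsq (cim z) < 0 -> cut_plane (c2 z).
Proof.
intros hz hy; destruct (Xc_rdot z hz) as [hX hxy].
destruct z as [[x0 y0] [x1 y1] [x2 y2]].
unfold cut_plane, rsq, rdot, cre, cim, Re, Im in *; simpl in *.
intros [-> hx2].
(* x.y = 0 and y0^2 < y1^2 give x1^2 <= x0^2, hence x2^2 > 1 since x^2 - y^2 = -1. *)
assert (hy1 : y0 * y0 < y1 * y1) by lra.
assert (hx1 : x1 * x1 <= x0 * x0).
{ assert (x1 * x1 * (y1 * y1) <= x0 * x0 * (y1 * y1)) by
    (replace (x1 * x1 * (y1 * y1)) with (x0 * y0 * (x0 * y0)) by
       (replace (x0 * y0) with (x1 * y1) by lra; ring); nra).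
  nra. }
nra.
Qed.

Lemma Copp_cdot_bvec z : Copp (cdot z bvec) = c2 z.
Proof. unfold cdot, bvec; simpl; ring. Qed.

Definition slice (u v : C) : cvec3 := CV 0 u v.

Lemma cdot_slice u v u' v' : cdot (slice u v) (slice u' v') = (- (u * u' + v * v'))%C.
Proof. unfold cdot, slice; simpl; ring. Qed.

Lemma Xc_slice u v : (u * u + v * v)%C = 1 -> Xc (slice u v).
Proof. intro h. unfold Xc. rewrite cdot_slice, h. apply C_eq_Re_Im; simpl; ring. Qed.

Lemma det3_slice e u v : det3 e (cre (slice u v)) (cim (slice u v)) = r0 e * Im (Cconj u * v).
Proof. destruct u, v; unfold det3, cre, cim, slice, Cconj, Re, Im; simpl; ring. Qed.

Lemma rsq_cim_slice u v : Im (Cconj u * v) <> 0 -> rsq (cim (slice u v)) < 0.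
Proof.
destruct u as [p q], v as [a b]; unfold rsq, rdot, cim, slice, Cconj, Re, Im; simpl.
intro h; apply Rnot_le_lt; intro; apply h.
assert (q = 0) as -> by nra; assert (b = 0) as -> by nra; ring.
Qed.

Lemma T_right_slice e u v : Vplus e -> Xc (slice u v) -> Im (Cconj u * v) < 0 ->
  T_right e (slice u v).
Proof.
intros [_ he0] huv ho; split; [|split].
- exact huv.
- apply rsq_cim_slice; lra.
- rewrite det3_slice; nra.
Qed.

Lemma T_left_slice e u v : Vplus e -> Xc (slice u v) -> Im (Cconj u * v) > 0 ->
  T_left e (slice u v).
Proof.
intros [_ he0] huv ho; split; [|split].
- exact huv.
- apply rsq_cim_slice; lra.
- rewrite det3_slice; nra.
Qed.

(* The rotation of the (z_1, z_2)-plane with cosine c and sine i s. *)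
Definition rot (c s : R) (u v : C) : cvec3 := slice (c * u + Ci * s * v) (c * v - Ci * s * u).

Lemma cdot_rot c s u v u' v' : c * c - s * s = 1 ->
  cdot (rot c s u v) (rot c s u' v') = cdot (slice u v) (slice u' v').
Proof.
intro hcs. unfold rot; rewrite !cdot_slice.
assert (hcs' : (c * c + Ci * Ci * (s * s))%C = 1) by (apply C_eq_Re_Im; simpl; lra).
transitivity (- ((c * c + Ci * Ci * (s * s)) * (u * u' + v * v')))%C; [ring|].
rewrite hcs'; ring.
Qed.

Lemma Xc_rot c s u v : c * c - s * s = 1 -> Xc (slice u v) -> Xc (rot c s u v).
Proof. unfold Xc; intro hcs; rewrite cdot_rot; auto. Qed.

Lemma Im_conj_rot (c s : R) (u v : C) :
  Im (Cconj (c * u + Ci * s * v) * (c * v - Ci * s * u)) =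
  (c * c + s * s) * Im (Cconj u * v) - c * s * (Re u ^ 2 + Im u ^ 2 + Re v ^ 2 + Im v ^ 2).
Proof. destruct u, v; simpl; ring. Qed.

Lemma C_sqrt_exists (w : C) : exists u : C, (u * u)%C = w.
Proof.
destruct w as [a b].
set (m := sqrt (a * a + b * b)).
assert (hm : m * m = a * a + b * b) by (apply sqrt_sqrt; nra).
assert (hm0 : 0 <= m) by apply sqrt_pos.
assert (ham : - m <= a <= m) by (split; apply Rnot_lt_le; intro; nra).
set (p := sqrt ((m + a) / 2)); set (q := sqrt ((m - a) / 2)).
assert (hp : p * p = (m + a) / 2) by (apply sqrt_sqrt; lra).
assert (hq : q * q = (m - a) / 2) by (apply sqrt_sqrt; lra).
assert (hpq : 2 * p * q = Rabs b).
{ apply Rsqr_inj.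
  - pose proof (sqrt_pos ((m + a) / 2)); pose proof (sqrt_pos ((m - a) / 2)).
    unfold p, q; nra.
  - apply Rabs_pos.
  - rewrite <- Rsqr_abs; unfold Rsqr.
    replace (2 * p * q * (2 * p * q)) with (4 * (p * p) * (q * q)) by ring.
    rewrite hp, hq; nra. }
destruct (Rle_or_lt 0 b) as [hb|hb].
- exists (p, q). rewrite Rabs_pos_eq in hpq by lra.
  apply C_eq_Re_Im; simpl; lra.
- exists (p, - q). rewrite Rabs_left in hpq by lra.
  apply C_eq_Re_Im; simpl; lra.
Qed.

Lemma Im_conj_mul_neq0 u w : cut_plane w -> (u * u + w * w)%C = 1 -> Im (Cconj u * w) <> 0.
Proof.
destruct u as [p q], w as [a b]; unfold cut_plane, Cconj, Re, Im; simpl.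
intros hw huw ho; apply hw.
pose proof (f_equal fst huw) as hre; pose proof (f_equal snd huw) as him; simpl in hre, him.
assert (hb : b = 0).
{ destruct (Req_dec b 0) as [|hb]; [assumption | exfalso].
  assert (ha : a * (q * q + b * b) = 0).
  { apply (Rmult_eq_reg_l b); [|exact hb]. nra. }
  assert (a = 0) as -> by nra.
  assert (p = 0) as -> by nra.
  nra. }
subst b; split; [reflexivity|].
destruct (Req_dec q 0) as [->|hq]; [split; nra|].
assert (a = 0) as -> by nra. lra.
Qed.

Lemma oriented_sqrt_one_minus_sq w : cut_plane w ->
  exists u, (u * u + w * w)%C = 1 /\ Im (Cconj u * w) < 0.
Proof.
intro hw. destruct (C_sqrt_exists (1 - w * w)) as [u hu].
assert (huw : (u * u + w * w)%C = 1) by (rewrite hu; ring).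
pose proof (Im_conj_mul_neq0 u w hw huw) as hne.
destruct (Rlt_or_le (Im (Cconj u * w)) 0) as [ho|ho].
- exists u; auto.
- exists (- u)%C; split.
  + rewrite <- huw; ring.
  + destruct u, w; simpl in *; lra.
Qed.

Lemma T_right_c2_image e w : Vplus e ->
  (exists z, T_right e z /\ w = Copp (cdot z bvec)) <-> cut_plane w.
Proof.
intro he; split.
- intros [z [[hz [hy _]] ->]]; rewrite Copp_cdot_bvec; now apply cut_plane_c2.
- intro hw; destruct (oriented_sqrt_one_minus_sq w hw) as [u [huw ho]].
  exists (slice u w); rewrite Copp_cdot_bvec; split; [|reflexivity].
  apply T_right_slice; auto using Xc_slice.
Qed.

Lemma T_left_c2_image e w : Vplus e ->
  (exists z, T_left e z /\ w = Copp (cdot z bvec)) <-> cut_plane w.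
Proof.
intro he; split.
- intros [z [[hz [hy _]] ->]]; rewrite Copp_cdot_bvec; now apply cut_plane_c2.
- intro hw; destruct (oriented_sqrt_one_minus_sq w hw) as [u [huw ho]].
  exists (slice (- u) w); rewrite Copp_cdot_bvec; split; [|reflexivity].
  apply T_left_slice; [auto | apply Xc_slice; rewrite <- huw; ring |].
  destruct u, w; simpl in *; lra.
Qed.

Lemma cdot_left_right_image e w : Vplus e ->
  (exists z z', T_left e z /\ T_right e z' /\ w = cdot z z') <-> cut_plane w.
Proof.
intro he; split.
{ intros [z [z' [hz [hz' ->]]]]; eapply cut_plane_cdot_left_right; eauto. }
intro hw. destruct (oriented_sqrt_one_minus_sq w hw) as [u [huw ho]].
set (v := (- w)%C).
assert (hz0 : Xc (slice u v)) by (apply Xc_slice; rewrite <- huw; unfold v; ring).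
assert (hb : Xc (slice 0 1)) by (apply Xc_slice; ring).
set (D := Im (Cconj u * v)).
assert (hD : D > 0) by (unfold D, v; destruct u, w; simpl in *; lra).
set (N := Re u ^ 2 + Im u ^ 2 + Re v ^ 2 + Im v ^ 2).
assert (hN : N > 0).
{ assert (2 * D <= N).
  { unfold D, N; destruct u as [p q], v as [a b]; simpl.
    pose proof (pow2_ge_0 (p - b)); pose proof (pow2_ge_0 (q + a)); nra. }
  lra. }
(* rot c s u v has orientation (c^2 + s^2) D - c s N (Im_conj_rot); s = D / N keeps it positive. *)
set (s := D / N).
assert (hs : s > 0) by (apply Rdiv_lt_0_compat; lra).
set (c := sqrt (1 + s * s)).
assert (hc : c * c = 1 + s * s) by (apply sqrt_sqrt; nra).
assert (hc1 : 1 <= c) by (assert (0 <= c) by apply sqrt_pos; nra).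
assert (hcs : c * c - s * s = 1) by lra.
exists (rot c s u v), (rot c s 0 1); split; [|split].
- apply T_left_slice; [exact he | exact (Xc_rot c s u v hcs hz0) |].
  rewrite Im_conj_rot; fold D N.
  replace (c * s * N) with (c * D) by (unfold s; field; lra).
  replace ((c * c + s * s) * D - c * D) with (D * (c * (c - 1) + s * s)) by ring.
  apply Rmult_lt_0_compat; nra.
- apply T_right_slice; [exact he | exact (Xc_rot c s 0 1 hcs hb) |].
  rewrite Im_conj_rot; simpl; nra.
- rewrite cdot_rot, cdot_slice by exact hcs; unfold v; ring.
Qed.

Lemma cdot_right_left_image e w : Vplus e ->
  (exists z z', T_right e z /\ T_left e z' /\ w = cdot z z') <-> cut_plane w.
Proof.
intro he; rewrite <- (cdot_left_right_image e w he); split;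
  intros [z [z' [hz [hz' ->]]]]; exists z', z; rewrite cdot_sym; auto.
Qed.

Theorem proposition6 (e : rvec3) (he : Vplus e) :
  (forall w : C, (exists z, T_right e z /\ w = Copp (cdot z bvec)) <-> cut_plane w) /\
  (forall w : C, (exists z, T_left e z /\ w = Copp (cdot z bvec)) <-> cut_plane w) /\
  (forall w : C, (exists z z', T_left e z /\ T_right e z' /\ w = cdot z z') <-> cut_plane w) /\
  (forall w : C, (exists z z', T_right e z /\ T_left e z' /\ w = cdot z z') <-> cut_plane w).
Proof.
split; [|split; [|split]]; intro w.
- exact (T_right_c2_image e w he).
- exact (T_left_c2_image e w he).
- exact (cdot_left_right_image e w he).
- exact (cdot_right_left_image e w he).
Qed.
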